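(* Consider the execution of Greedy Dual on any MPMD or MBPMD instance. For any request $u$ and any time $\tau\ge\mathrm{atime}(u)$, $$\sum_{S:\,u\in S} y_S(\tau)\le \tau-\mathrm{atime}(u),$$ and equality holds if $u$ is still free (unmatched) at time $\tau$.
   Context: Problem (MPMD / MBPMD). Let $(\mathcal{X},\mathrm{dist})$ be a metric space. An instance consists of $2m$ requests $u_1,\dots,u_{2m}$. Each request $u$ is a triple $(\mathrm{pos}(u),\mathrm{atime}(u),\mathrm{sgn}(u))$, where $\mathrm{pos}(u)\in\mathcal{X}$ is its location and $\mathrm{atime}(u)\ge0$ is its arrival time, with arrival times nondecreasing. In MPMD, $\mathrm{sgn}(u)=0$ for all requests. In MBPMD, exactly $m$ requests have sign $+1$ and $m$ have sign $-1$. At time $\tau$, an algorithm may match two arrived, unmatched requests $u,v$ with $\mathrm{sgn}(u)=-\mathrm{sgn}(v)$, at cost $\mathrm{dist}(\mathrm{pos}(u),\mathrm{pos}(v))$ (connection cost) plus $(\tau-\mathrm{atime}(u))+(\tau-\mathrm{atime}(v))$ (waiting costs). All requests must eventually be matched. Notation. Edges are unordered pairs $\{u,v\}$ of distinct requests with $\mathrm{sgn}(u)=-\mathrm{sgn}(v)$. For a set $S$ of requests, $\delta(S)$ is the set of edges with exactly one endpoint in $S$. In MPMD, $\mathrm{sur}(S)=|S|\bmod 2$; in MBPMD, $\mathrm{sur}(S)=|\sum_{u\in S}\mathrm{sgn}(u)|$. For an edge $e=(u,v)$, $\mathrm{cost}(e)=\mathrm{dist}(\mathrm{pos}(u),\mathrm{pos}(v))+|\mathrm{atime}(u)-\mathrm{atime}(v)|$.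 Algorithm Greedy Dual (GD). GD maintains a dual variable $y_S\ge0$ for every set $S$ of already-arrived requests; $y_S(\tau)$ denotes its value at time $\tau$. It also maintains a partition of the arrived requests into active sets, with $\mathcal{A}(u)$ denoting the active set containing $u$. An active set is growing if it contains at least one free request, and non-growing otherwise. - When a request $u$ arrives, $\mathcal{A}(u)\leftarrow\{u\}$ becomes a new active set, and $y_S\leftarrow 0$ for every new set $S$ containing $u$. - Tight-constraint event: while there is an edge $e=(u,v)$ between arrived requests with $\mathcal{A}(u)\neq\mathcal{A}(v)$ and $\sum_{S:\,e\in\delta(S)}y_S=\mathrm{cost}(e)$, GD does the following. It merges the two sets: $S=\mathcal{A}(u)\cup\mathcal{A}(v)$ becomes active and $\mathcal{A}(w)\leftarrow S$ for all $w\in S$, while $\mathcal{A}(u)$ and $\mathcal{A}(v)$ become inactive. It marks the edge $e$. Then, while there are free $u',v'\in S$ with $\mathrm{sgn}(u')=-\mathrm{sgn}(v')$, it matches $u'$ with $v'$ at the current time. - At all other times, $y_S$ increases continuously at rate $1$ (the same rate as time) for every active growing set $S$; all other dual variables stay constant. *)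

(* Greedy Dual (GD) for MPMD / MBPMD, modelled as a
   small-step transition system over states at event times. *)
From HB Require Import structures.
From mathcomp Require Import all_boot all_order all_algebra.
Set Implicit Arguments. Unset Strict Implicit. Unset Printing Implicit Defensive.
Import Order.TTheory GRing.Theory Num.Theory.
Local Open Scope ring_scope.

Definition is_metric (R : realFieldType) (X : Type) (dist : X -> X -> R) : Prop :=
  (forall x y, 0 <= dist x y) /\
  (forall x y, dist x y = 0 <-> x = y) /\
  (forall x y, dist x y = dist y x) /\
  (forall x y z, dist x z <= dist x y + dist y z).

(* An instance with 2m requests, indexed by 'I_(2*m) in arrival order. *)
Record instance (R : realFieldType) (X : Type) (m : nat) := Instance {
  pos   : 'I_(2 * m) -> X;
  atime : 'I_(2 * m) -> R;
  sgn   : 'I_(2 * m) -> int }.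

Definition is_MPMD R X m (I : instance R X m) : Prop :=
  forall u, sgn I u = 0%R.

Definition is_MBPMD R X m (I : instance R X m) : Prop :=
  (forall u, sgn I u = 1%R \/ sgn I u = (-1)%R) /\
  #|[set u | sgn I u == 1%R]| = m /\ #|[set u | sgn I u == (-1)%R]| = m.

Definition valid_instance R X m (I : instance R X m) : Prop :=
  (forall u, 0 <= atime I u) /\
  (forall u v : 'I_(2 * m), (u <= v)%N -> atime I u <= atime I v) /\
  (is_MPMD I \/ is_MBPMD I).

Section GD.
Variables (R : realFieldType) (X : Type) (dist : X -> X -> R) (m : nat).
Variable (I : instance R X m).
Local Notation req := 'I_(2 * m).

Definition is_edge (u v : req) : Prop := u <> v /\ sgn I u = - sgn I v.

Definition cost (u v : req) : R :=
  dist (pos I u) (pos I v) + `|atime I u - atime I v|.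

(* sum of y_S over the sets S with {u,v} in delta(S) *)
Definition dsum (y : {set req} -> R) (u v : req) : R :=
  \sum_(S : {set req} | (u \in S) != (v \in S)) y S.

Record state := State {
  st_time    : R;
  st_arr     : {set req};
  st_y       : {set req} -> R;
  st_act     : req -> {set req};    (* A(u), meaningful for arrived u *)
  st_matched : {set req};
  st_M       : seq (req * req * R); (* matched pairs with matching time *)
  st_pend    : option {set req}     (* Some S: inside the matching loop
                                       after merging into S *) }.

Definition active (s : state) (S : {set req}) : bool :=
  [exists w, (w \in st_arr s) && (st_act s w == S)].

Definition growing (s : state) (S : {set req}) : bool :=
  [exists w in S, w \notin st_matched s].

Definition init_state : state :=
  State 0 set0 (fun _ => 0) (fun _ => set0) set0 [::] None.

Inductive gd_step : state -> state -> Prop :=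
| step_arrive (s : state) (u : req) :
    st_pend s = None ->
    u \notin st_arr s ->
    atime I u = st_time s ->
    (forall v : req, (v < u)%N -> v \in st_arr s) ->
    gd_step s
      (State (st_time s) (u |: st_arr s)
             (fun S => if u \in S then 0 else st_y s S)
             (fun w => if w == u then [set u] else st_act s w)
             (st_matched s) (st_M s) None)
(* tight-constraint event on edge (u,v): merge the two active sets *)
| step_merge (s : state) (u v : req) :
    st_pend s = None ->
    u \in st_arr s -> v \in st_arr s ->
    is_edge u v ->
    st_act s u != st_act s v ->
    dsum (st_y s) u v = cost u v ->
    let S := st_act s u :|: st_act s v in
    gd_step s
      (State (st_time s) (st_arr s) (st_y s)
             (fun w => if w \in S then S else st_act s w)
             (st_matched s) (st_M s) (Some S))
| step_match (s : state) (S : {set req}) (u v : req) :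
    st_pend s = Some S ->
    u \in S -> v \in S ->
    u \notin st_matched s -> v \notin st_matched s ->
    is_edge u v ->
    gd_step s
      (State (st_time s) (st_arr s) (st_y s) (st_act s)
             (u |: (v |: st_matched s)) ((u, v, st_time s) :: st_M s)
             (Some S))
| step_endmatch (s : state) (S : {set req}) :
    st_pend s = Some S ->
    (forall u v : req, u \in S -> v \in S ->
       u \notin st_matched s -> v \notin st_matched s -> ~ is_edge u v) ->
    gd_step s
      (State (st_time s) (st_arr s) (st_y s) (st_act s)
             (st_matched s) (st_M s) None)
(* continuous growth during [tau, tau + d]: every active growing set
   increases at rate 1, no arrival and no tight edge occurs inside *)
| step_grow (s : state) (d : R) :
    st_pend s = None ->
    0 < d ->
    (forall v : req, atime I v <= st_time s -> v \in st_arr s) ->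
    (forall v : req, v \notin st_arr s -> st_time s + d <= atime I v) ->
    (forall u v : req, u \in st_arr s -> v \in st_arr s -> is_edge u v ->
       st_act s u != st_act s v -> dsum (st_y s) u v < cost u v) ->
    let y' := fun S => if active s S && growing s S then st_y s S + d
                       else st_y s S in
    (forall u v : req, u \in st_arr s -> v \in st_arr s -> is_edge u v ->
       st_act s u != st_act s v -> dsum y' u v <= cost u v) ->
    gd_step s
      (State (st_time s + d) (st_arr s) y' (st_act s)
             (st_matched s) (st_M s) None).

Inductive gd_reachable : state -> Prop :=
| reach_init : gd_reachable init_state
| reach_step s s' : gd_reachable s -> gd_step s s' -> gd_reachable s'.

End GD.

From HB Require Import structures.
From mathcomp Require Import all_boot all_order all_algebra.
From mathcomp Require Import lra.
Set Implicit Arguments.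
Unset Strict Implicit.
Unset Printing Implicit Defensive.
Import Order.TTheory GRing.Theory Num.Theory.
Local Open Scope ring_scope.

(* The bound is an invariant of the execution.  When u arrives, every dual
   variable of a set containing u is 0.  During growth, the only active set
   containing an arrived request u is its own class A(u), because the active
   sets partition the arrived requests.  So the load of u grows at rate 1
   exactly while A(u) contains a free request, in particular while u itself
   is free, and does not grow otherwise.  A request that has not arrived yet
   has load 0, and its arrival time is the current time. *)

Section Invariant.
Variables (R : realFieldType) (X : Type) (dist : X -> X -> R) (m : nat)
  (I : instance R X m).
Local Notation req := 'I_(2 * m).
Local Notation state := (state R m).

Definition dual_load (y : {set req} -> R) (u : req) : R :=
  \sum_(S : {set req} | u \in S) y S.

Record gd_invariant (s : state) : Prop := GdInvariant {
  unarrived_later : forall v, v \notin st_arr s -> st_time s <= atime I v;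
  dual_supported : forall S : {set req}, ~~ (S \subset st_arr s) -> st_y s S = 0;
  act_self : forall w, w \in st_arr s -> w \in st_act s w;
  act_arrived : forall w, w \in st_arr s -> st_act s w \subset st_arr s;
  act_class : forall w x, w \in st_arr s -> x \in st_act s w ->
    st_act s x = st_act s w;
  dual_load_le : forall u, u \in st_arr s ->
    dual_load (st_y s) u <= st_time s - atime I u;
  dual_load_free : forall u, u \in st_arr s -> u \notin st_matched s ->
    dual_load (st_y s) u = st_time s - atime I u }.

Lemma init_invariant :
  (forall u, 0 <= atime I u) -> gd_invariant (init_state R m).
Proof. by move=> atime_ge0; split=> //= w; rewrite in_set0. Qed.

Lemma dual_unarrived s u (S : {set req}) :
  gd_invariant s -> u \notin st_arr s -> u \in S -> st_y s S = 0.
Proof.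
move=> inv u_new uS; apply: (dual_supported inv).
by apply: contra u_new => /subsetP; apply.
Qed.

Lemma dual_load_unarrived s u :
  gd_invariant s -> u \notin st_arr s -> dual_load (st_y s) u = 0.
Proof. by move=> inv u_new; apply: big1 => S; apply: dual_unarrived. Qed.

Lemma arrive_invariant s u :
  gd_invariant s -> u \notin st_arr s -> atime I u = st_time s ->
  gd_invariant (State (st_time s) (u |: st_arr s)
    (fun S => if u \in S then 0 else st_y s S)
    (fun w => if w == u then [set u] else st_act s w)
    (st_matched s) (st_M s) None).
Proof.
move=> inv u_new arr_u.
have old_ne_u w : w \in st_arr s -> (w == u) = false.
  by move=> wa; apply: contraNF u_new => /eqP <-.
have load_u : dual_load (fun S => if u \in S then 0 else st_y s S) u = 0.
  by apply: big1 => S ->.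
have load_old w :
    dual_load (fun S => if u \in S then 0 else st_y s S) w = dual_load (st_y s) w.
  apply: eq_bigr => S _; case: ifP => // uS.
  by rewrite (dual_unarrived inv u_new uS).
split=> /=.
- by move=> v; rewrite in_setU1 negb_or => /andP[_]; apply: unarrived_later.
- move=> S S_new; case: ifP => // _; apply: (dual_supported inv).
  by apply: contra S_new => /subset_trans; apply; apply: subsetUr.
- move=> w; rewrite in_setU1; case: eqP => [-> _|_]; first exact: set11.
  exact: act_self.
- move=> w; rewrite in_setU1; case: eqP => [-> _|_]; first by rewrite sub1set setU11.
  by move=> /(act_arrived inv) /subset_trans; apply; apply: subsetUr.
- move=> w x; rewrite in_setU1; case: eqP => [-> _|_ /= wa xw].
    by rewrite in_set1 => /eqP ->; rewrite eqxx.
  have xa : x \in st_arr s by apply: (subsetP (act_arrived inv wa)).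
  by rewrite old_ne_u // (act_class inv wa xw).
- move=> w; rewrite in_setU1; case: (eqVneq w u) => [->|wu /= wa].
    by rewrite load_u arr_u subrr.
  by rewrite load_old; apply: dual_load_le.
- move=> w; rewrite in_setU1; case: (eqVneq w u) => [-> _ _|wu /= wa].
    by rewrite load_u arr_u subrr.
  by rewrite load_old; apply: dual_load_free.
Qed.

Lemma matching_invariant s (M : {set req}) Ms p :
  gd_invariant s -> st_matched s \subset M ->
  gd_invariant (State (st_time s) (st_arr s) (st_y s) (st_act s) M Ms p).
Proof.
move=> inv sub_M; split=> //=; try by case: inv.
move=> u ua u_free; apply: (dual_load_free inv) => //.
by apply: contra u_free; apply: (subsetP sub_M).
Qed.

Lemma merge_invariant s u v Ms p :
  gd_invariant s -> u \in st_arr s -> v \in st_arr s ->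
  let S := st_act s u :|: st_act s v in
  gd_invariant (State (st_time s) (st_arr s) (st_y s)
    (fun w => if w \in S then S else st_act s w) (st_matched s) Ms p).
Proof.
move=> inv ua va S; split=> //=; try by case: inv.
- by move=> w wa; case: ifP => // _; apply: (act_self inv).
- move=> w wa; case: ifP => _; last exact: (act_arrived inv).
  by rewrite subUset !(act_arrived inv).
- move=> w x wa; case: ifP => [_ ->//|wS xw].
  case: ifP => [|_]; last exact: (act_class inv).
  rewrite !in_setU => /orP[xu|xv]; move: wS; rewrite in_setU.
  + by rewrite -(act_class inv ua xu) (act_class inv wa xw) (act_self inv).
  + by rewrite -(act_class inv va xv) (act_class inv wa xw) (act_self inv wa) orbT.
Qed.

Lemma active_class s S u :
  gd_invariant s -> active s S -> u \in S -> S = st_act s u.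
Proof.
move=> inv /existsP[w /andP[wa /eqP <-]] uw.
by rewrite (act_class inv wa uw).
Qed.

Lemma dual_load_grow s d u :
  gd_invariant s -> u \in st_arr s ->
  dual_load (fun S => if active s S && growing s S then st_y s S + d
                      else st_y s S) u =
  dual_load (st_y s) u + (if growing s (st_act s u) then d else 0).
Proof.
move=> inv ua; have uu := act_self inv ua.
rewrite /dual_load (bigD1 (st_act s u)) //= [in RHS](bigD1 (st_act s u)) //=.
have act_u : active s (st_act s u) by apply/existsP; exists u; rewrite ua eqxx.
rewrite act_u (eq_bigr (fun S => st_y s S)); last first.
  move=> S /andP[uS S_other]; case: ifP => // /andP[S_act _].
  by move: S_other; rewrite -(active_class inv S_act uS) eqxx.
by case: (growing s _); rewrite ?addr0 // addrAC.
Qed.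

Lemma grow_invariant s d Ms :
  gd_invariant s -> 0 < d ->
  (forall v, v \notin st_arr s -> st_time s + d <= atime I v) ->
  gd_invariant (State (st_time s + d) (st_arr s)
    (fun S => if active s S && growing s S then st_y s S + d else st_y s S)
    (st_act s) (st_matched s) Ms None).
Proof.
move=> inv d_gt0 later; split=> //=; try by case: inv.
- move=> S S_new; case: ifP => [/andP[/existsP[w /andP[wa /eqP wS]] _]|_].
    by move: S_new; rewrite -wS (act_arrived inv).
  exact: (dual_supported inv).
- move=> u ua; rewrite dual_load_grow //.
  have := dual_load_le inv ua; case: ifP => _; lra.
- move=> u ua u_free; rewrite dual_load_grow //.
  have -> : growing s (st_act s u).
    by apply/existsP; exists u; rewrite (act_self inv) // u_free.
  by rewrite (dual_load_free inv) // addrAC.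
Qed.

Lemma gd_step_invariant s s' :
  gd_step dist I s s' -> gd_invariant s -> gd_invariant s'.
Proof.
case: s s' / => [s u _ u_new arr_u _ | s u v _ ua va _ _ _ S | s S u v _ _ _ _ _ _
  | s S _ _ | s d _ d_gt0 _ later _ y' _] inv.
- exact: arrive_invariant.
- exact: merge_invariant.
- by apply: matching_invariant => //; apply/subsetP => w wM; rewrite !in_setU1 wM !orbT.
- exact: matching_invariant.
- exact: grow_invariant.
Qed.

Lemma gd_reachable_invariant s :
  valid_instance I -> gd_reachable dist I s -> gd_invariant s.
Proof.
move=> [atime_ge0 _]; elim: s / => [|s s' _ inv step].
  exact: init_invariant.
exact: gd_step_invariant step inv.
Qed.

End Invariant.

Theorem lemma2 (R : realFieldType) (X : Type) (dist : X -> X -> R) (m : nat)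
    (I : instance R X m) :
  is_metric dist -> valid_instance I ->
  forall s : state R m, gd_reachable dist I s ->
  forall u : 'I_(2 * m), atime I u <= st_time s ->
    (\sum_(S : {set 'I_(2 * m)} | u \in S) st_y s S <= st_time s - atime I u) /\
    (u \notin st_matched s ->
       \sum_(S : {set 'I_(2 * m)} | u \in S) st_y s S = st_time s - atime I u).
Proof.
move=> _ valid s reach u u_arrived.
have inv := gd_reachable_invariant valid reach.
have [ua|u_new] := boolP (u \in st_arr s).
  by split=> [|u_free]; [apply: (dual_load_le inv) | apply: (dual_load_free inv)].
have arrives_now : atime I u = st_time s.
  by apply/eqP; rewrite eq_le u_arrived (unarrived_later inv).
by rewrite -/(dual_load _ u) (dual_load_unarrived inv) // arrives_now subrr.
Qed.
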